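(* Let $q$ be a power of $2$ and let $\mathscr{C}$ be an $\mathbb{F}_q$-linear additive conjucyclic code of length $n$ over $\mathbb{F}_{q^2}$. Then its alternating dual $\mathscr{C}^{\perp_a}$ is also an $\mathbb{F}_q$-linear additive conjucyclic code.
   Context: An $\mathbb{F}_q$-linear additive code of length $n$ over $\mathbb{F}_{q^2}$ is an $\mathbb{F}_q$-subspace of $\mathbb{F}_{q^2}^n$; it is conjucyclic if closed under $T(c_0,\ldots,c_{n-1})=(c_{n-1}^q,c_0,\ldots,c_{n-2})$. Fix a primitive element $\beta$ of $\mathbb{F}_{q^2}$; the alternating inner product is $\langle u,v\rangle_a=(\beta^{2q}-\beta^2)\sum_{i=0}^{n-1}(u_iv_i^q-u_i^qv_i)$ and $\mathscr{C}^{\perp_a}=\{v\in\mathbb{F}_{q^2}^n:\langle u,v\rangle_a=0\ \forall u\in\mathscr{C}\}$. *)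

From HB Require Import structures.
From mathcomp Require Import all_boot all_order all_algebra all_field.
Set Implicit Arguments. Unset Strict Implicit. Unset Printing Implicit Defensive.
Import Order.TTheory GRing.Theory.
Local Open Scope ring_scope.

Section Codes.
Variables (L : finFieldType) (q n : nat).

Definition coord_nat (c : 'rV[L]_n) (k : nat) : L :=
  if insub k is Some j then c 0 j else 0.

Definition conj_shift (c : 'rV[L]_n) : 'rV[L]_n :=
  \row_(i < n) (if (i : nat) == 0%N then (coord_nat c n.-1) ^+ q
                else coord_nat c (i : nat).-1).

(* F_q = {a in F_{q^2} | a^q = a}; an F_q-linear additive code is an
   F_q-subspace of F_{q^2}^n *)
Definition Fq_linear (C : {set 'rV[L]_n}) : Prop :=
  [/\ (0 : 'rV[L]_n) \in C,
      (forall u v, u \in C -> v \in C -> u + v \in C) &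
      (forall (a : L) u, a ^+ q = a -> u \in C -> a *: u \in C)].

Definition conjucyclic (C : {set 'rV[L]_n}) : Prop :=
  forall c, c \in C -> conj_shift c \in C.

Definition alt_ip (beta : L) (u v : 'rV[L]_n) : L :=
  (beta ^+ (2 * q) - beta ^+ 2) *
    \sum_(i < n) (u 0 i * (v 0 i) ^+ q - (u 0 i) ^+ q * v 0 i).

Definition alt_dual (beta : L) (C : {set 'rV[L]_n}) : {set 'rV[L]_n} :=
  [set v | [forall u in C, alt_ip beta u v == 0]].

End Codes.

From HB Require Import structures.
From mathcomp Require Import all_boot all_order all_algebra all_field.
Set Implicit Arguments.
Unset Strict Implicit.
Unset Printing Implicit Defensive.
Import GRing.Theory.
Local Open Scope ring_scope.

(** When [q] is a power of the characteristic, [x |-> x ^+ q] is additive and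
    fixes [F_q], so [alt_ip beta u v] is [F_q]-linear in [v] and the dual of
    any set is an [F_q]-subspace.  On [F_(q^2)] this map is an involution, so
    the conjucyclic shift [T] changes the wrap-around term
    [u v^q - u^q v] of the form into its negative, which equals it in
    characteristic 2: [T] preserves the form.  Being injective, [T] permutes
    the finite conjucyclic code [C], hence maps [C^perp] into itself. *)

Section AltIpLinear.
Variables (L : finFieldType) (q n : nat) (beta : L).
Hypothesis q_pchar : [pchar L].-nat q.

Lemma alt_ip0r (u : 'rV[L]_n) : alt_ip q beta u 0 = 0.
Proof.
have q_gt0 : (0 < q)%N by case/andP: q_pchar.
rewrite /alt_ip big1 ?mulr0 // => i _.
by rewrite mxE expr0n gtn_eqF // !mulr0 subrr.
Qed.

Lemma alt_ipDr (u v w : 'rV[L]_n) :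
  alt_ip q beta u (v + w) = alt_ip q beta u v + alt_ip q beta u w.
Proof.
rewrite /alt_ip -mulrDr -big_split; congr (_ * _); apply: eq_bigr => i _.
by rewrite !mxE exprDn_pchar // !mulrDr opprD addrACA.
Qed.

Lemma alt_ipZr (u v : 'rV[L]_n) (a : L) :
  a ^+ q = a -> alt_ip q beta u (a *: v) = a * alt_ip q beta u v.
Proof.
move=> a_fixed; rewrite /alt_ip [RHS]mulrCA; congr (_ * _); rewrite mulr_sumr.
apply: eq_bigr => i _; rewrite !mxE exprMn a_fixed mulrBr.
by rewrite [u 0 i * _]mulrCA [u 0 i ^+ q * _]mulrCA.
Qed.

Lemma Fq_linear_alt_dual (C : {set 'rV[L]_n}) : Fq_linear q (alt_dual q beta C).
Proof.
split=> [|v w|a v a_fixed]; rewrite !inE.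
- by apply/forall_inP => u _; rewrite alt_ip0r.
- move=> /forall_inP v_perp /forall_inP w_perp; apply/forall_inP => u uC.
  by rewrite alt_ipDr (eqP (v_perp u uC)) (eqP (w_perp u uC)) addr0.
- move=> /forall_inP v_perp; apply/forall_inP => u uC.
  by rewrite alt_ipZr // (eqP (v_perp u uC)) mulr0.
Qed.

End AltIpLinear.

Lemma coord_natE (L : finFieldType) (n : nat) (c : 'rV[L]_n) (i : 'I_n) :
  coord_nat c i = c 0 i.
Proof. by rewrite /coord_nat valK. Qed.

Section ConjShift.
Variables (L : finFieldType) (q : nat).

Lemma conj_shift_ord0 (n : nat) (c : 'rV[L]_n.+1) :
  conj_shift q c 0 ord0 = c 0 ord_max ^+ q.
Proof. by rewrite mxE (coord_natE c ord_max). Qed.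

Lemma conj_shift_lift (n : nat) (c : 'rV[L]_n.+1) (i : 'I_n) :
  conj_shift q c 0 (lift ord0 i) = c 0 (widen_ord (leqnSn n) i).
Proof. by rewrite mxE lift0 (coord_natE c (widen_ord _ i)). Qed.

Hypothesis exprqK : forall x : L, x ^+ q ^+ q = x.

Lemma conj_shift_inj (n : nat) : injective (@conj_shift L q n).
Proof.
case: n => [|k] c d eq_cd; apply/rowP => j; first by case: j.
have [i ->|->] := unliftP ord_max j.
  have -> : lift ord_max i = widen_ord (leqnSn k) i.
    by apply: val_inj; apply: lift_max.
  by rewrite -!conj_shift_lift eq_cd.
by rewrite -[c 0 _]exprqK -[d 0 _]exprqK -!conj_shift_ord0 eq_cd.
Qed.

Lemma conj_shift_imset (n : nat) (C : {set 'rV[L]_n}) :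
  conjucyclic q C -> [set conj_shift q c | c in C] = C.
Proof.
move=> C_cc; apply/eqP; rewrite eqEcard card_imset ?leqnn ?andbT.
  by apply/subsetP => _ /imsetP[c cC ->]; apply: C_cc.
exact: conj_shift_inj.
Qed.

Hypothesis pchar2 : 2 \in [pchar L].

Lemma alt_ip_conj_shift (n : nat) (beta : L) (u v : 'rV[L]_n) :
  alt_ip q beta (conj_shift q u) (conj_shift q v) = alt_ip q beta u v.
Proof.
case: n u v => [|n] u v; first by rewrite /alt_ip !big_ord0.
rewrite /alt_ip big_ord_recl big_ord_recr /= addrC !conj_shift_ord0 !exprqK.
congr (_ * (_ + _)); last by apply: eq_bigr => i _; rewrite !conj_shift_lift.
by rewrite -[LHS]oppr_pchar2 // opprB.
Qed.

Lemma conjucyclic_alt_dual (n : nat) (beta : L) (C : {set 'rV[L]_n}) :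
  conjucyclic q C -> conjucyclic q (alt_dual q beta C).
Proof.
move=> C_cc v; rewrite !inE => /forall_inP v_perp; apply/forall_inP => u.
rewrite -(conj_shift_imset C_cc) => /imsetP[w wC ->].
by rewrite alt_ip_conj_shift v_perp.
Qed.

End ConjShift.

Theorem corollary4p7 (L : finFieldType) (m n : nat) (beta : L)
  (C : {set 'rV[L]_n}) :
  (0 < m)%N ->
  #|L| = ((2 ^ m) ^ 2)%N ->
  (#|L|.-1).-primitive_root beta ->
  Fq_linear (2 ^ m) C ->
  conjucyclic (2 ^ m) C ->
  Fq_linear (2 ^ m) (alt_dual (2 ^ m) beta C) /\
  conjucyclic (2 ^ m) (alt_dual (2 ^ m) beta C).
Proof.
(* [beta] only scales the form, and the dual is a subspace whatever [C] is. *)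
move=> _ cardL _ _ C_cc.
have pchar2 : 2 \in [pchar L].
  by apply: (@card_finPcharP _ _ (m * 2)); rewrite // cardL expnM.
have q_pchar : [pchar L].-nat (2 ^ m)%N by rewrite pnatX pnatE // pchar2.
have exprqK (x : L) : x ^+ (2 ^ m)%N ^+ (2 ^ m)%N = x.
  by rewrite -exprM mulnn -cardL expf_card.
split; first exact: Fq_linear_alt_dual.
exact: conjucyclic_alt_dual.
Qed.
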